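(* Let $F,K\ge1$ and $0\le Z<F$ be integers. If some element of $S$ occupies exactly $Z+1$ cells of an $S$-PDA$(F,K,Z)$, then $|S|\ge (F-Z-1)(Z+1)+1$.
   Context: A placement delivery array $S$-PDA$(F,K,Z)$ is an $F\times K$ array $R=(r_{j,k})$, $1\le j\le F$, $1\le k\le K$, over a finite set $S$ such that: (1) each cell is either empty or contains an element of $S$; (2) each column contains exactly $Z$ empty cells; (3) each element of $S$ occurs at most once in each row and at most once in each column; (4) if two distinct nonempty cells satisfy $r_{j_1,k_1}=r_{j_2,k_2}=t\in S$, then the cells $r_{j_1,k_2}$ and $r_{j_2,k_1}$ are empty. *)

From mathcomp Require Import all_boot.
Set Implicit Arguments. Unset Strict Implicit. Unset Printing Implicit Defensive.

(* An F x K array over S: None = empty cell, Some s = cell containing s. *)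
Definition array (S : finType) (F K : nat) := 'I_F -> 'I_K -> option S.

Definition is_PDA (S : finType) (F K Z : nat) (R : array S F K) : Prop :=
  (forall k : 'I_K, #|[set j : 'I_F | R j k == None]| = Z) /\
  (forall (j : 'I_F) (k1 k2 : 'I_K) (t : S),
      R j k1 = Some t -> R j k2 = Some t -> k1 = k2) /\
  (forall (j1 j2 : 'I_F) (k : 'I_K) (t : S),
      R j1 k = Some t -> R j2 k = Some t -> j1 = j2) /\
  (forall (j1 j2 : 'I_F) (k1 k2 : 'I_K) (t : S),
      (j1, k1) <> (j2, k2) ->
      R j1 k1 = Some t -> R j2 k2 = Some t ->
      R j1 k2 = None /\ R j2 k1 = None).

Definition occurrences (S : finType) (F K : nat) (R : array S F K) (s : S) : nat :=
  #|[set p : 'I_F * 'I_K | R p.1 p.2 == Some s]|.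

From mathcomp Require Import all_boot.
From mathcomp Require Import zify.

Set Implicit Arguments.
Unset Strict Implicit.
Unset Printing Implicit Defensive.

(* Let s occupy Z+1 cells; their rows J and columns C are both of size Z+1.
   By condition (4), in a column of C the Z rows of J not holding s are empty,
   so these are all the empty cells of that column: the rectangle (~J) x C is
   completely filled.  Condition (4) again forces the entries of a filled
   rectangle to be pairwise distinct, and none of them is s, whence
   |S| >= (F - Z - 1)(Z + 1) + 1. *)

Section Cells.

Variables (S : finType) (F K : nat) (R : array S F K).

Hypothesis row_uniq : forall (j : 'I_F) (k1 k2 : 'I_K) (t : S),
  R j k1 = Some t -> R j k2 = Some t -> k1 = k2.
Hypothesis col_uniq : forall (j1 j2 : 'I_F) (k : 'I_K) (t : S),
  R j1 k = Some t -> R j2 k = Some t -> j1 = j2.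
Hypothesis cross_empty : forall (j1 j2 : 'I_F) (k1 k2 : 'I_K) (t : S),
  (j1, k1) <> (j2, k2) -> R j1 k1 = Some t -> R j2 k2 = Some t ->
  R j1 k2 = None /\ R j2 k1 = None.

Definition cells_of (s : S) := [set p : 'I_F * 'I_K | R p.1 p.2 == Some s].
Definition rows_of (s : S) := [set p.1 | p in cells_of s].
Definition cols_of (s : S) := [set p.2 | p in cells_of s].

Lemma cells_ofP (s : S) (p : 'I_F * 'I_K) :
  reflect (R p.1 p.2 = Some s) (p \in cells_of s).
Proof. by rewrite inE; apply: eqP. Qed.

Lemma card_rows_of (s : S) : #|rows_of s| = occurrences R s.
Proof.
rewrite card_in_imset // => -[j k] [j' k'] /cells_ofP /= Hp /cells_ofP /= Hq Ej.
by rewrite -Ej in Hq *; rewrite (row_uniq Hp Hq).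
Qed.

Lemma card_cols_of (s : S) : #|cols_of s| = occurrences R s.
Proof.
rewrite card_in_imset // => -[j k] [j' k'] /cells_ofP /= Hp /cells_ofP /= Hq Ek.
by rewrite -Ek in Hq *; rewrite (col_uniq Hp Hq).
Qed.

Lemma rows_of_empty_in_col (s : S) (p : 'I_F * 'I_K) : p \in cells_of s ->
  rows_of s :\ p.1 \subset [set j | R j p.2 == None].
Proof.
move=> /cells_ofP Hp; apply/subsetP => i /setD1P [ip /imsetP [q /cells_ofP Hq Ei]].
rewrite {i}Ei in ip *.
have nqp : (q.1, q.2) <> (p.1, p.2) by case=> Eq _; rewrite Eq eqxx in ip.
by rewrite inE (cross_empty nqp Hq Hp).1.
Qed.

Lemma filled_off_rows_of (Z : nat) (s : S) (j : 'I_F) (k : 'I_K) :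
  #|[set i | R i k == None]| = Z -> occurrences R s = Z.+1 ->
  j \notin rows_of s -> k \in cols_of s -> R j k != None.
Proof.
move=> col_empty occ_s jJ /imsetP [p pP Ek]; subst k; apply/negP => /eqP Rj.
have sub : j |: (rows_of s :\ p.1) \subset [set i | R i p.2 == None].
  by rewrite subUset sub1set inE Rj eqxx rows_of_empty_in_col.
have pJ : p.1 \in rows_of s by apply/imsetP; exists p.
move: (subset_leq_card sub) (cardsD1 p.1 (rows_of s)).
rewrite col_empty cardsU1 !inE negb_and jJ orbT pJ card_rows_of occ_s; lia.
Qed.

Definition entry (x0 : S) (p : 'I_F * 'I_K) := odflt x0 (R p.1 p.2).

(* Two equal entries of a filled rectangle span a third cell of it that (4)
   would force to be empty. *)
Lemma card_filled_rectangle (x0 : S) (A : {set 'I_F}) (B : {set 'I_K}) :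
  (forall j k, j \in A -> k \in B -> R j k != None) ->
  #|entry x0 @: setX A B| = #|A| * #|B|.
Proof.
move=> filled; rewrite -cardsX card_in_imset // => -[j k] [j' k'].
rewrite !inE /entry /= => /andP [jA kB] /andP [j'A k'B].
case Rjk: (R j k) (filled _ _ jA kB) => [t|] // _.
case Rjk': (R j' k') (filled _ _ j'A k'B) => [t'|] // _ /= Et.
rewrite Et in Rjk; apply/eqP/negPn/negP => neq.
have nqp : (j, k) <> (j', k') by move=> E; rewrite E eqxx in neq.
by move: (filled _ _ jA k'B); rewrite (cross_empty nqp Rjk Rjk').1.
Qed.

End Cells.

Theorem mainTheorem13 (S : finType) (F K Z : nat) (R : array S F K) :
  1 <= F -> 1 <= K -> Z < F ->
  @is_PDA S F K Z R ->
  (exists s : S, @occurrences S F K R s = Z.+1) ->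
  (F - Z - 1) * Z.+1 + 1 <= #|S|.
Proof.
move=> _ _ _ [col_empty [row_uniq [col_uniq cross_empty]]] [s occ_s].
set A := ~: rows_of R s; set B := cols_of R s.
have filled j k : j \in A -> k \in B -> R j k != None.
  by rewrite inE; apply: filled_off_rows_of.
have cardE : #|entry R s @: setX A B| = (F - Z.+1) * Z.+1.
  by rewrite card_filled_rectangle // cardsCs setCK card_ord card_rows_of
    ?card_cols_of ?occ_s.
have sE : s \notin entry R s @: setX A B.
  apply/imsetP => -[[j k]]; rewrite inE /= /entry => /andP [jA kB].
  case Rjk: (R j k) (filled _ _ jA kB) => [t|] // _ /= Ets.
  move: jA; rewrite inE => /negP; apply; apply/imsetP.
  by exists (j, k); rewrite // inE Rjk Ets.
have := max_card (s |: entry R s @: setX A B).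
by rewrite cardsU1 sE cardE; lia.
Qed.
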